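(* Let $f_{SA}(x)=\sqrt{\frac{x^2+1}{2}}-\frac{x+1}{2}$ for $x\in(0,\infty)$, let $f_{SA}^*(u)=u\,f_{SA}\!\left(\frac{1-u}{u}\right)$ for $u\in(0,1)$, extended by continuity to $[0,1]$ (explicitly $f_{SA}^*(u)=\frac12\left[\sqrt{2(u^2+(1-u)^2)}-1\right]$), and define $\overline M_{SA}(C_1,C_2)=E_X\{f_{SA}^*(P(C_2\mid x))\}$. Then $$P_e\le \frac12\left[1-\frac{2}{\sqrt2-1}\,\overline M_{SA}(C_1,C_2)\right].$$
   Context: Two-class decision problem: classes (hypotheses) $C_1,C_2$, an observation $x$ in a space $\mathrm X$ with density $p(x)$, and a posteriori probabilities $P(C_1\mid x),P(C_2\mid x)\ge0$ with $P(C_1\mid x)+P(C_2\mid x)=1$. $E_X\{g(x)\}=\int_{\mathrm X} g(x)p(x)\,dx$. $P_e=E_X\{\min(P(C_1\mid x),P(C_2\mid x))\}$ is the Bayesian probability of error. Equivalently $E_X\{f^*(P(C_2\mid x))\}=E_X\{f(P(C_1\mid x)/P(C_2\mid x))\,P(C_2\mid x)\}$. *)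

From HB Require Import structures.
From mathcomp Require Import all_boot all_order all_algebra.
From mathcomp Require Import all_classical all_reals all_analysis.
Set Implicit Arguments. Unset Strict Implicit. Unset Printing Implicit Defensive.
Import Order.TTheory GRing.Theory Num.Theory.
Local Open Scope ring_scope.

Definition EX (R : realType) (d : measure_display) (T : measurableType d)
  (mu : {measure set T -> \bar R}) (p : T -> R) (g : T -> R) : \bar R :=
  (\int[mu]_(x in setT) (g x * p x)%:E)%E.

Definition f_SA (R : realType) (x : R) : R :=
  Num.sqrt ((x ^+ 2 + 1) / 2) - (x + 1) / 2.

Definition f_SA_star (R : realType) (u : R) : R :=
  (Num.sqrt (2 * (u ^+ 2 + (1 - u) ^+ 2)) - 1) / 2.

(* Bayesian probability of error P_e = E_X{min(P(C1|x), P(C2|x))}. *)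
Definition Pe (R : realType) (d : measure_display) (T : measurableType d)
  (mu : {measure set T -> \bar R}) (p P1 P2 : T -> R) : \bar R :=
  EX mu p (fun x => Num.min (P1 x) (P2 x)).

Definition M_SA (R : realType) (d : measure_display) (T : measurableType d)
  (mu : {measure set T -> \bar R}) (p P2 : T -> R) : \bar R :=
  EX mu p (fun x => f_SA_star (P2 x)).

From HB Require Import structures.
From mathcomp Require Import all_boot all_order all_algebra.
From mathcomp Require Import all_classical all_reals all_analysis.
From mathcomp Require Import ring lra.

Set Implicit Arguments.
Unset Strict Implicit.
Unset Printing Implicit Defensive.
Import measurable_realfun.
Import Order.TTheory GRing.Theory Num.Theory.
Local Open Scope ring_scope.

(* f_SA^* is convex and symmetric about 1/2, with f_SA^*(0) = (sqrt 2 - 1)/2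
   and f_SA^*(1/2) = 0, so on [0, 1/2] it lies below its chord
   (sqrt 2 - 1)(1/2 - u).  With t = min(u, 1 - u) this gives pointwise
   min(P1, P2) + f_SA^*(P2) / (sqrt 2 - 1) <= 1/2, and integrating against
   the probability density p yields the bound. *)

Lemma sqrt2_gt1 (R : rcfType) : 1 < Num.sqrt (2 : R).
Proof. by rewrite -[X in X < _]sqrtr1 ltr_sqrt //; lra. Qed.

Lemma f_SA_starC (R : realType) (u : R) : f_SA_star (1 - u) = f_SA_star u.
Proof. by rewrite /f_SA_star; congr ((Num.sqrt (2 * _) - 1) / 2); ring. Qed.

Lemma f_SA_star_ge0 (R : realType) (u : R) : 0 <= f_SA_star u.
Proof.
rewrite /f_SA_star divr_ge0 // subr_ge0 -[X in X <= _]sqrtr1 ler_sqrt //.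
all: by have := sqr_ge0 (2 * u - 1); nra.
Qed.

Lemma f_SA_star_le_chord (R : realType) (t : R) : 0 <= t -> t <= 1 / 2 ->
  f_SA_star t <= (Num.sqrt 2 - 1) * (1 / 2 - t).
Proof.
move=> t0 t1; set s := Num.sqrt (2 : R).
have s2 : s ^+ 2 = 2 by rewrite sqr_sqrtr.
have s1 : 1 < s := @sqrt2_gt1 R.
have chord0 : 0 <= s - 2 * (s - 1) * t by nra.
suff : Num.sqrt (2 * (t ^+ 2 + (1 - t) ^+ 2)) <= s - 2 * (s - 1) * t.
  by rewrite /f_SA_star; lra.
rewrite -[X in _ <= X]ger0_norm // -sqrtr_sqr ler_sqrt ?sqr_ge0 // -subr_ge0.
have -> : (s - 2 * (s - 1) * t) ^+ 2 - 2 * (t ^+ 2 + (1 - t) ^+ 2)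
          = (s ^+ 2 - 2) * (1 - 2 * t) ^+ 2 + 4 * ((s - 1) * t * (1 - 2 * t)).
  by ring.
by rewrite s2 subrr mul0r add0r; apply: mulr_ge0 => //; nra.
Qed.

Lemma minr_add_f_SA_star_le (R : realType) (u : R) : 0 <= u -> u <= 1 ->
  Num.min (1 - u) u + f_SA_star u / (Num.sqrt 2 - 1) <= 1 / 2.
Proof.
move=> u0 u1; have s1 : 0 < Num.sqrt (2 : R) - 1 by rewrite subr_gt0 sqrt2_gt1.
suff bound (t : R) : 0 <= t -> t <= 1 / 2 -> t + f_SA_star t / (Num.sqrt 2 - 1) <= 1 / 2.
  rewrite /Num.min; case: ltP => hu.
    by rewrite -f_SA_starC; apply: bound; lra.
  by apply: bound; lra.
move=> t0 t1; rewrite -lerBrDl ler_pdivrMr //.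
by have := f_SA_star_le_chord t0 t1; lra.
Qed.

Lemma measurable_f_SA_star (R : realType) : measurable_fun setT (@f_SA_star R).
Proof.
apply: measurable_funM => //; apply: measurable_funB => //.
apply: measurableT_comp; first exact: continuous_measurable_fun (@sqrt_continuous R).
apply: measurable_funM => //.
by apply: measurable_funD; apply: measurable_funX => //; apply: measurable_funB.
Qed.

Section expectation_bound.
Context (R : realType) (d : measure_display) (T : measurableType d).
Variables (mu : {measure set T -> \bar R}) (p : T -> R).
Hypotheses (mp : measurable_fun setT p) (p0 : forall x, 0 <= p x).

Let measurable_weighted (g : T -> R) : measurable_fun setT g ->
  measurable_fun setT (fun x => (g x * p x)%:E).
Proof. by move=> mg; apply/measurable_EFinP; apply: measurable_funM. Qed.

Lemma EX_ge0 (g : T -> R) : (forall x, 0 <= g x) -> (0 <= EX mu p g)%E.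
Proof. by move=> g0; apply: integral_ge0 => x _; rewrite lee_fin mulr_ge0. Qed.

Lemma EX_combination_le (g h : T -> R) (c b : R) :
  (\int[mu]_(x in setT) (p x)%:E = 1)%E ->
  measurable_fun setT g -> measurable_fun setT h ->
  (forall x, 0 <= g x) -> (forall x, 0 <= h x) -> 0 <= c ->
  (forall x, g x + c * h x <= b) ->
  (EX mu p g + c%:E * EX mu p h <= b%:E)%E.
Proof.
move=> p1 mg mh g0 h0 c0 gh_le.
have gp0 x : (0 <= (g x * p x)%:E)%E by rewrite lee_fin mulr_ge0.
have hp0 x : (0 <= (h x * p x)%:E)%E by rewrite lee_fin mulr_ge0.
have b0 : 0 <= b by apply: le_trans (gh_le point); rewrite addr_ge0 ?mulr_ge0.
have pE0 x : (0 <= (p x)%:E)%E by rewrite lee_fin.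
have mgp := measurable_weighted mg; have mhp := measurable_weighted mh.
have chp0 x : (0 <= c%:E * (h x * p x)%:E)%E by rewrite mule_ge0.
have mchp : measurable_fun setT (fun x => c%:E * (h x * p x)%:E)%E.
  by apply: emeasurable_funM => //; exact: measurable_cst.
have mbp : measurable_fun setT (fun x => (b * p x)%:E).
  by apply/measurable_EFinP; apply: measurable_funM => //; exact: measurable_cst.
rewrite /EX -ge0_integralZl_EFin // -ge0_integralD //.
rewrite -[b%:E]mule1 -p1 -ge0_integralZl_EFin //; last exact/measurable_EFinP.
apply: ge0_le_integral => //.
- by move=> x _; rewrite adde_ge0.
- exact: emeasurable_funD.
move=> x _; rewrite -EFinM -EFinD lee_fin mulrA -mulrDl.
exact: ler_wpM2r.
Qed.

End expectation_bound.

Lemma lee_half_rearrange (R : realType) (K B : \bar R) (s : R) :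
  1 < s -> (0 <= K)%E -> (0 <= B)%E ->
  (K + ((s - 1)^-1)%:E * B <= (1 / 2)%:E)%E ->
  (K <= (1 / 2 : R)%:E * (1 - (2 / (s - 1) : R)%:E * B))%E.
Proof.
move=> s1; case: K => [k| |] //; case: B => [b| |] // k0 b0.
- rewrite -EFinM -EFinD !lee_fin in k0 b0 * => H.
  have -> : 1 / 2 * (1 - 2 / (s - 1) * b) = 1 / 2 - (s - 1)^-1 * b.
    by field; lra.
  lra.
- by rewrite gt0_muley ?lte_fin ?invr_gt0 ?subr_gt0 // addey.
- by rewrite gt0_muley ?lte_fin ?invr_gt0 ?subr_gt0 // addye.
Qed.

Theorem mainTheorem1 (R : realType) (d : measure_display) (T : measurableType d)
  (mu : {measure set T -> \bar R}) (p P1 P2 : T -> R) :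
  measurable_fun setT p ->
  (forall x, 0 <= p x) ->
  (\int[mu]_(x in setT) (p x)%:E = 1)%E ->
  measurable_fun setT P1 -> measurable_fun setT P2 ->
  (forall x, 0 <= P1 x) -> (forall x, 0 <= P2 x) ->
  (forall x, P1 x + P2 x = 1) ->
  (Pe mu p P1 P2 <=
     (1 / 2 : R)%:E * (1 - (2 / (Num.sqrt 2 - 1) : R)%:E * M_SA mu p P2))%E.
Proof.
move=> mp p0 p1 mP1 mP2 P10 P20 P12.
have s1 := @sqrt2_gt1 R.
have min0 x : 0 <= Num.min (P1 x) (P2 x) by rewrite le_min P10 P20.
have f0 x : 0 <= f_SA_star (P2 x) by exact: f_SA_star_ge0.
have mf : measurable_fun setT (fun x => f_SA_star (P2 x)).
  exact: measurableT_comp (@measurable_f_SA_star R) mP2.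
apply: lee_half_rearrange; rewrite ?EX_ge0 //.
apply: EX_combination_le; rewrite ?invr_ge0 ?subr_ge0 ?ltW //.
  exact: measurable_minr.
move=> x; have P1E : P1 x = 1 - P2 x by rewrite -(P12 x) addrK.
by rewrite P1E mulrC minr_add_f_SA_star_le // -(P12 x) lerDr.
Qed.
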